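(* Let $M\ge1$ and $\mathbf a\in\mathcal A_M$. Then the sequence $\mathbf a^\infty$ is irreducible (as a sequence) if and only if the word $\mathbf a$ is irreducible (as a fundamental word).
   Context: Order and word operations. $\Omega_M=\{0,\dots,M\}^{\mathbb N}$ with lexicographic order and left shift $\sigma$; words are compared via $\mathbf c\prec\mathbf d$ iff $\mathbf c0^\infty\prec\mathbf d0^\infty$. For a word $c_1\dots c_k$: - $c_1\dots c_k^\pm=c_1\dots c_{k-1}(c_k\pm1)$, when defined; - $\overline{c_1\dots c_k}=(M-c_1)\dots(M-c_k)$, and $\overline{(c_i)}=(M-c_i)$. Irreducible sequences. Let $\mathbf V=\{(c_i)\in\Omega_M:\overline{(c_i)}\preceq\sigma^n((c_i))\preceq(c_i)\ \forall n\ge0\}$. A sequence $(a_i)\in\mathbf V$ is irreducible if for every $j\in\mathbb N$: whenever $a_j>0$ and $(a_1\dots a_j^-)^\infty\in\mathbf V$, we have $a_1\dots a_j(\overline{a_1\dots a_j}^+)^\infty\prec(a_i)$. Fundamental words. A word $a_1\dots a_m$ ($m\ge2$) is fundamental if $\overline{a_1\dots a_{m-i}}\preceq a_{i+1}\dots a_m\prec a_1\dots a_{m-i}$ for $1\le i<m$. When $M\ge2$, a letter $a_1$ is fundamental if $M-a_1\le a_1<M$. $\mathcal A_M$ is the set of fundamental words, and $\mathcal A_1$ is the case $M=1$. The graph. For $\mathbf a\in\mathcal A_M$, let $G$ have vertices Start, $A$, $B$ and edges - $e_0$: Start$\to A$, - $e_1$: $A\to B$, - $e_2$: $B\to B$,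 - $e_3$: $B\to A$, - $e_4$: $A\to A$. It carries two labelings: - $\mathcal L_{\mathbf a}$: $e_0,e_3\mapsto\mathbf a^+$; $e_1\mapsto\overline{\mathbf a^+}$; $e_2\mapsto\mathbf a$; $e_4\mapsto\overline{\mathbf a}$; - $\mathcal L^*$: $e_0,e_3,e_4\mapsto1$; $e_1,e_2\mapsto0$. Composition. For a path $e_{i_1}\dots e_{i_k}$ with $i_1=0$, let $\Phi_{\mathbf a}$ map $\mathcal L_{\mathbf a}(e_{i_1})\cdots\mathcal L_{\mathbf a}(e_{i_k})$ to $\mathcal L^*(e_{i_1}\dots e_{i_k})$. For $\mathbf d\in\mathcal A_1$, $\mathbf a\circ\mathbf d:=\Phi_{\mathbf a}^{-1}(\mathbf d)$. Irreducible words. $\mathbf a\in\mathcal A_M$ is irreducible if there are no $\mathbf c\in\mathcal A_M$, $\mathbf d\in\mathcal A_1$ with $\mathbf a=\mathbf c\circ\mathbf d$. *)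

From mathcomp Require Import all_boot.
Set Implicit Arguments. Unset Strict Implicit. Unset Printing Implicit Defensive.

(* Sequences in Omega_M are functions nat -> nat, 0-indexed:
   (c i) is the letter c_{i+1} of the paper.  Words are seq nat. *)

Definition in_Omega (M : nat) (c : nat -> nat) : Prop := forall i, c i <= M.

Definition seq_lt (c d : nat -> nat) : Prop :=
  exists n, (forall i, i < n -> c i = d i) /\ c n < d n.
Definition seq_le (c d : nat -> nat) : Prop :=
  seq_lt c d \/ (forall i, c i = d i).

Definition shift (n : nat) (c : nat -> nat) : nat -> nat := fun i => c (i + n).

Definition pad0 (w : seq nat) : nat -> nat := fun i => nth 0 w i.
Definition word_lt (c d : seq nat) : Prop := seq_lt (pad0 c) (pad0 d).
Definition word_le (c d : seq nat) : Prop := seq_le (pad0 c) (pad0 d).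

(* w^infty (w nonempty) *)
Definition per (w : seq nat) : nat -> nat := fun i => nth 0 w (i %% size w).
Definition app_seq (w : seq nat) (s : nat -> nat) : nat -> nat :=
  fun i => if i < size w then nth 0 w i else s (i - size w).

Definition wplus (w : seq nat) : seq nat :=
  rcons (take (size w).-1 w) (last 0 w).+1.
Definition wminus (w : seq nat) : seq nat :=
  rcons (take (size w).-1 w) (last 0 w).-1.

Definition wbar (M : nat) (w : seq nat) : seq nat := map (fun x => M - x) w.
Definition sbar (M : nat) (c : nat -> nat) : nat -> nat := fun i => M - c i.

Definition in_V (M : nat) (c : nat -> nat) : Prop :=
  in_Omega M c /\
  forall n, seq_le (sbar M c) (shift n c) /\ seq_le (shift n c) c.

(* irreducible sequences; a_1 ... a_j = mkseq a j, a_j = a j.-1 *)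
Definition irreducible_seq (M : nat) (a : nat -> nat) : Prop :=
  in_V M a /\
  forall j, 0 < j ->
    0 < a j.-1 ->
    in_V M (per (wminus (mkseq a j))) ->
    seq_lt (app_seq (mkseq a j) (per (wplus (wbar M (mkseq a j))))) a.

Definition fundamental (M : nat) (w : seq nat) : Prop :=
  all (fun x => x <= M) w /\
  match w with
  | [::] => False
  | [:: a1] => M - a1 <= a1 /\ a1 < M
  | _ =>
    forall i, 1 <= i -> i < size w ->
      word_le (wbar M (take (size w - i) w)) (drop i w) /\
      word_lt (drop i w) (take (size w - i) w)
  end.

Inductive vertex := Start | VA | VB.
Inductive edge := e0 | e1 | e2 | e3 | e4.

Definition esrc (e : edge) : vertex :=
  match e with e0 => Start | e1 => VA | e2 => VB | e3 => VB | e4 => VA end.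
Definition etgt (e : edge) : vertex :=
  match e with e0 => VA | e1 => VB | e2 => VB | e3 => VA | e4 => VA end.

Fixpoint path_from (v : vertex) (p : seq edge) : Prop :=
  match p with
  | [::] => True
  | e :: p' => esrc e = v /\ path_from (etgt e) p'
  end.

Definition gpath (p : seq edge) : Prop :=
  match p with
  | [::] => False
  | e :: _ => e = e0 /\ path_from Start p
  end.

Definition La (M : nat) (a : seq nat) (e : edge) : seq nat :=
  match e with
  | e0 => wplus a
  | e3 => wplus a
  | e1 => wbar M (wplus a)
  | e2 => a
  | e4 => wbar M a
  end.
Definition Lstar (e : edge) : nat :=
  match e with e0 => 1 | e3 => 1 | e4 => 1 | e1 => 0 | e2 => 0 end.

(* w = a o d, i.e. w = Phi_a^{-1}(d): there is a path whose L_a-labeling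
   is w and whose L^*-labeling is d *)
Definition comp_eq (M : nat) (a d w : seq nat) : Prop :=
  exists p, gpath p /\ map Lstar p = d /\ flatten (map (La M a) p) = w.

Definition irreducible_word (M : nat) (a : seq nat) : Prop :=
  fundamental M a /\
  ~ (exists c d, fundamental M c /\ fundamental 1 d /\ comp_eq M c d a).

(* If a = c o d, the path spelling a leaves A only after e0 e4^r e1, so a^infty begins
   with c^+ (bar c)^r bar(c^+), which is below c^+ (bar c)^infty: irreducibility of
   a^infty fails at j = |c|.
   Conversely, suppose it fails at j and put c = (a_1 ... a_j)^-.  Then c is fundamental
   and sigma^|c| (a^infty) <= (bar c)^infty.  Squeezing each successive block of length |c|
   between the two labels allowed by the current state shows that a^infty is the
   L_c-labelling of an infinite walk in G, with state digits d_0 = 1, d_1, ...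
   Periodicity forces |c| to divide |a| and the walk to be in state B at the end of each
   period; the lexicographic inequalities making a fundamental transfer blockwise to
   d = d_0 ... d_(n-1), so d is fundamental and a = c o d. *)

From mathcomp Require Import all_boot zify.
From Stdlib Require Import Classical FunctionalExtensionality.
Set Implicit Arguments. Unset Strict Implicit. Unset Printing Implicit Defensive.

Definition agree (x y : nat -> nat) n := forall i, i < n -> x i = y i.

Definition lex_lt (x y : nat -> nat) n := exists k, k < n /\ agree x y k /\ x k < y k.
Definition lex_le (x y : nat -> nat) n := forall k, k < n -> agree x y k -> x k <= y k.

Section WindowOrder.
Implicit Types (x y z : nat -> nat) (n : nat).

Lemma agree_sym x y n : agree x y n -> agree y x n.
Proof. by move=> A i Hi; rewrite A. Qed.

Lemma agree_trans x y z n : agree x y n -> agree y z n -> agree x z n.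
Proof. by move=> A B i Hi; rewrite A // B. Qed.

Lemma agreeW x y n n' : n' <= n -> agree x y n -> agree x y n'.
Proof. move=> le_n A i Hi; apply: A; lia. Qed.

Lemma agree_or_first_diff x y n :
  agree x y n \/ exists t, t < n /\ agree x y t /\ x t <> y t.
Proof.
elim: n => [|n [IH|[t [Ht [A Hne]]]]]; first by left.
- case: (eqVneq (x n) (y n)) => E.
  + by left => i; rewrite ltnS leq_eqVlt => /orP [/eqP ->|/IH].
  + by right; exists n; split => //; split => //; apply/eqP.
- by right; exists t; split => //; lia.
Qed.

Lemma lex_trichotomy x y n : agree x y n \/ lex_lt x y n \/ lex_lt y x n.
Proof.
case: (agree_or_first_diff x y n) => [|[t [Ht [A Hne]]]]; first by left.
right; have [Hl|Hl] : x t < y t \/ y t < x t by lia.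
- by left; exists t.
- by right; exists t; split => //; split => //; apply: agree_sym.
Qed.

Lemma lex_ltW x y n : lex_lt x y n -> lex_le x y n.
Proof.
move=> [t [Ht [A Hl]]] k Hk Ak.
have [h|[Ek|h]] : k < t \/ k = t \/ t < k by lia.
- by rewrite A.
- by subst k; apply: ltnW.
- by have := Ak t h; lia.
Qed.

Lemma lex_leNgt x y n : lex_le x y n -> ~ lex_lt y x n.
Proof. by move=> H [t [Ht [A Hl]]]; have := H t Ht (agree_sym A); lia. Qed.

Lemma agree_lex_le x y n : agree x y n -> lex_le x y n.
Proof. by move=> A k Hk _; rewrite A. Qed.

Lemma lex_le_eqVlt x y n : lex_le x y n <-> agree x y n \/ lex_lt x y n.
Proof.
split; last by case=> [/agree_lex_le|/lex_ltW].
move=> H; case: (lex_trichotomy x y n) => [A|[L|L]]; [by left|by right|].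
by have := lex_leNgt H L.
Qed.

Lemma eq_lex_lt x y x' y' n :
  agree x x' n -> agree y y' n -> lex_lt x y n -> lex_lt x' y' n.
Proof.
move=> A B [t [Ht [At Hl]]]; exists t; split => //; split; last by rewrite -A // -B.
move=> i Hi; rewrite -A; last lia; rewrite -B; last lia; exact: At.
Qed.

Lemma eq_lex_le x y x' y' n :
  agree x x' n -> agree y y' n -> lex_le x y n -> lex_le x' y' n.
Proof.
move=> A B H k Hk Ak; rewrite -A // -B //; apply: H => // i Hi.
by rewrite A ?B ?Ak //; lia.
Qed.

Lemma lex_lt_trans x y z n : lex_lt x y n -> lex_lt y z n -> lex_lt x z n.
Proof.
move=> [t1 [H1 [A1 L1]]] [t2 [H2 [A2 L2]]].
have [h|[E|h]] : t1 < t2 \/ t1 = t2 \/ t2 < t1 by lia.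
- exists t1; split => //; split; last by rewrite -(A2 t1 h).
  by move=> i Hi; rewrite A1 // A2 //; lia.
- subst t2; exists t1; split => //; split; last lia.
  by move=> i Hi; rewrite A1 // A2.
- exists t2; split => //; split; last by rewrite (A1 t2 h).
  by move=> i Hi; rewrite A1 ?A2 //; lia.
Qed.

Lemma lex_lt_le_trans x y z n : lex_lt x y n -> lex_le y z n -> lex_lt x z n.
Proof.
move=> L /lex_le_eqVlt [A|K]; last exact: lex_lt_trans L K.
by apply: eq_lex_lt L => //; apply: agree_sym.
Qed.

Lemma lex_le_lt_trans x y z n : lex_le x y n -> lex_lt y z n -> lex_lt x z n.
Proof.
move=> /lex_le_eqVlt [A|L] K; last exact: lex_lt_trans L K.
by apply: eq_lex_lt K => //; apply: agree_sym.
Qed.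

Lemma lex_le_trans x y z n : lex_le x y n -> lex_le y z n -> lex_le x z n.
Proof.
move=> H /lex_le_eqVlt [A|K]; last exact/lex_ltW/(lex_le_lt_trans H).
by apply: eq_lex_le H.
Qed.

Lemma lex_lt_widen x y n n' : n <= n' -> lex_lt x y n -> lex_lt x y n'.
Proof. by move=> le_n [t [Ht R]]; exists t; split => //; lia. Qed.

Lemma lex_le_narrow x y n n' : n' <= n -> lex_le x y n -> lex_le x y n'.
Proof. by move=> le_n H k Hk; apply: H; lia. Qed.

Lemma lex_lt_cat x y s n :
  agree x y s -> lex_lt (shift s x) (shift s y) n -> lex_lt x y (s + n).
Proof.
move=> A [t [Ht [At Hl]]]; exists (t + s); split; first lia; split => //.
move=> i Hi; case: (ltnP i s) => h; first exact: A.
by have := At (i - s); rewrite /shift subnK //; apply; lia.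
Qed.

Lemma lex_lt_catr x y s n :
  lex_le x y s -> lex_lt (shift s x) (shift s y) n -> lex_lt x y (s + n).
Proof.
move=> /lex_le_eqVlt [A|L] L'; first exact: lex_lt_cat.
by apply: lex_lt_widen L; apply: leq_addr.
Qed.

Lemma lex_lt_after_ones x y s n :
  (forall t, t < s -> x t = 1) -> (forall t, y t <= 1) ->
  lex_lt x y (s + n) -> lex_lt (shift s x) (shift s y) n.
Proof.
move=> x1 y_le1 [t [Ht [A Hl]]].
have le_st : s <= t by case: (leqP s t) => // h; have := x1 t h; have := y_le1 t; lia.
exists (t - s); split; first lia; split; last by rewrite /shift subnK.
by move=> i Hi; rewrite /shift A //; lia.
Qed.

Lemma lex_le_after_zeros x y s n : (forall t, t < s -> y t = 0) ->
  lex_le x y (s + n) -> lex_le (shift s x) (shift s y) n.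
Proof.
move=> y0 H.
have A : agree x y s.
  elim: s y0 H => [|s IH] y0 H i Hi //.
  have IH' : agree x y s.
    by apply: IH => [t Ht|]; [apply: y0; lia | apply: lex_le_narrow H; lia].
  case: (ltnP i s) => h; first exact: IH'.
  have -> : i = s by lia.
  by have := H s; rewrite y0 // => /(_ ltac:(lia) IH'); lia.
move=> k Hk Ak; rewrite /shift; apply: H; first lia.
move=> i Hi; case: (ltnP i s) => h; first exact: A.
by have := Ak (i - s); rewrite /shift subnK //; apply; lia.
Qed.

Lemma lex_le_bar M x y n :
  (forall i, i < n -> x i <= M) -> (forall i, i < n -> y i <= M) ->
  lex_le x y n -> lex_le (sbar M y) (sbar M x) n.
Proof.
move=> Bx By H k Hk Ak; rewrite /sbar.
suff : x k <= y k by lia.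
apply: H => // i Hi; have := Ak i Hi; rewrite /sbar.
by have := Bx i ltac:(lia); have := By i ltac:(lia); lia.
Qed.

Lemma lex_lt_succ_last x x' n :
  0 < n -> agree x x' n.-1 -> (x n.-1).+1 = x' n.-1 -> lex_lt x x' n.
Proof. by move=> n_gt0 A E; exists n.-1; split; [lia | split => //; lia]. Qed.

Lemma lex_le_succ_last x x' y n : 0 < n -> agree x x' n.-1 -> (x n.-1).+1 = x' n.-1 ->
  lex_lt x y n -> lex_le x' y n.
Proof.
move=> n_gt0 A E [t [Ht [At Lt]]] k Hk Ak.
have [h|[Ek|h]] : k < t \/ k = t \/ t < k by lia.
- by rewrite -A ?At //; lia.
- subst k; case: (ltnP t n.-1) => h2; first by rewrite -A // ltnW.
  have Et : t = n.-1 by lia.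
  by rewrite Et -E -Et.
- case: (ltnP t n.-1) => h2; last lia.
  by have := Ak t h; rewrite -A //; lia.
Qed.

Lemma lex_squeeze u v f n : 0 < n ->
  agree u v n.-1 -> (u n.-1).+1 = v n.-1 ->
  lex_le u f n -> lex_le f v n -> agree f u n \/ agree f v n.
Proof.
move=> n_gt0 A E W1 W2.
case: (agree_or_first_diff f u n) => [|[t [Ht [At Ne]]]]; first by left.
have Lt : u t < f t by have := W1 t Ht (agree_sym At); lia.
have AtV : agree f v t by move=> i Hi; rewrite At // A //; lia.
case: (ltnP t n.-1) => h1.
- by have := W2 t Ht AtV; rewrite -A //; lia.
- have Et : t = n.-1 by lia.
  right => i Hi; case: (ltnP i n.-1) => h2; first by apply: AtV; rewrite Et.
  have -> : i = n.-1 by lia.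
  subst t; have := W2 n.-1 Ht AtV; lia.
Qed.

End WindowOrder.

Section InfiniteLex.
Implicit Types (x y z : nat -> nat).

Lemma seq_le_lexP x y : seq_le x y <-> forall k, agree x y k -> x k <= y k.
Proof.
split.
- case=> [[n [A Hl]]|E] k Ak; last by rewrite E.
  have [h|[->|h]] : k < n \/ k = n \/ n < k by lia.
  + by rewrite A.
  + exact: ltnW.
  + by have := Ak n h; lia.
- move=> H; case: (classic (forall i, x i = y i)) => [E|NE]; first by right.
  left; have [i Hi] := not_all_ex_not _ _ NE.
  case: (agree_or_first_diff x y i.+1) => [A|[t [Ht [A Hne]]]].
  + by have := A i (ltnSn i).
  + by exists t; split => //; have := H t A; lia.
Qed.

Lemma seq_le_lex x y n : seq_le x y -> lex_le x y n.
Proof. by move=> /seq_le_lexP H k _; apply: H. Qed.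

Lemma seq_lt_lex x y : seq_lt x y <-> exists n, lex_lt x y n.
Proof.
split; first by move=> [n [A Hl]]; exists n.+1, n.
by move=> [n [t [_ [A Hl]]]]; exists t.
Qed.

Lemma seq_lt_le_false x y : seq_lt x y -> seq_le y x -> False.
Proof. by move=> /seq_lt_lex [n L] /(@seq_le_lex _ _ n) H; apply: (lex_leNgt H L). Qed.

Lemma seq_lt_or_ge x y : seq_lt x y \/ seq_le y x.
Proof.
case: (classic (seq_lt x y)) => [|N]; first by left.
right; apply/seq_le_lexP => k A.
case: (leqP (y k) (x k)) => // h; exfalso; apply: N; exists k; split => //.
by move=> i Hi; rewrite A.
Qed.

Lemma seq_le_trans x y z : seq_le x y -> seq_le y z -> seq_le x z.
Proof.
move=> H1 H2; case: (seq_lt_or_ge z x) => // /seq_lt_lex [n L].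
exfalso; apply: (lex_leNgt _ L).
exact: lex_le_trans (seq_le_lex (n := n) H1) (seq_le_lex H2).
Qed.

Lemma seq_le_shift x y j : seq_le x y -> agree x y j -> seq_le (shift j x) (shift j y).
Proof.
move=> /seq_le_lexP H A; apply/seq_le_lexP => k Ak; rewrite /shift; apply: H.
move=> i Hi; case: (ltnP i j) => h; first exact: A.
by have := Ak (i - j); rewrite /shift subnK //; apply; lia.
Qed.

Lemma seq_le_bar M x y : (forall i, x i <= M) -> (forall i, y i <= M) ->
  seq_le x y -> seq_le (sbar M y) (sbar M x).
Proof.
move=> Bx By /seq_le_lexP H; apply/seq_le_lexP => k A.
have := lex_le_bar (n := k.+1) (fun i _ => Bx i) (fun i _ => By i) (fun k' _ A' => H k' A').
by apply.
Qed.

End InfiniteLex.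

Section WordOperations.
Implicit Types (w c : seq nat) (M : nat).

Lemma size_wbar M w : size (wbar M w) = size w.
Proof. exact: size_map. Qed.

Lemma nth_wbar M w i : i < size w -> nth 0 (wbar M w) i = M - nth 0 w i.
Proof. by move=> lt_i; rewrite (nth_map 0). Qed.

Lemma size_wplus w : 0 < size w -> size (wplus w) = size w.
Proof. by move=> w_gt0; rewrite /wplus size_rcons size_takel; lia. Qed.

Lemma size_wminus w : 0 < size w -> size (wminus w) = size w.
Proof. by move=> w_gt0; rewrite /wminus size_rcons size_takel; lia. Qed.

Lemma nth_rcons_take_last w y i : 0 < size w -> i < size w ->
  nth 0 (rcons (take (size w).-1 w) y) i = if i == (size w).-1 then y else nth 0 w i.
Proof.
move=> w_gt0 lt_i; rewrite nth_rcons size_takel; last lia.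
case: (ltnP i (size w).-1) => h.
- by rewrite nth_take //; have -> : (i == (size w).-1) = false by lia.
- have -> : i = (size w).-1 by lia.
  by rewrite eqxx.
Qed.

Lemma nth_wplus w i : 0 < size w -> i < size w ->
  nth 0 (wplus w) i = if i == (size w).-1 then (nth 0 w i).+1 else nth 0 w i.
Proof.
move=> w_gt0 lt_i; rewrite nth_rcons_take_last //.
by case: eqP => // ->; rewrite nth_last.
Qed.

Lemma nth_wminus w i : 0 < size w -> i < size w ->
  nth 0 (wminus w) i = if i == (size w).-1 then (nth 0 w i).-1 else nth 0 w i.
Proof.
move=> w_gt0 lt_i; rewrite nth_rcons_take_last //.
by case: eqP => // ->; rewrite nth_last.
Qed.

Lemma wplusK w : 0 < size w -> wminus (wplus w) = w.
Proof.
move=> w_gt0; apply: (@eq_from_nth _ 0); first by rewrite size_wminus size_wplus.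
move=> i; rewrite size_wminus size_wplus // => lt_i.
by rewrite nth_wminus ?size_wplus // nth_wplus //; case: eqP.
Qed.

Lemma wminusK w : 0 < size w -> 0 < nth 0 w (size w).-1 -> wplus (wminus w) = w.
Proof.
move=> w_gt0 last_gt0; apply: (@eq_from_nth _ 0); first by rewrite size_wplus size_wminus.
move=> i; rewrite size_wplus size_wminus // => lt_i.
by rewrite nth_wplus ?size_wminus // nth_wminus //; case: eqP => // ->; lia.
Qed.

Lemma wplus_wbar_wplus M c : 0 < size c -> nth 0 c (size c).-1 < M ->
  wplus (wbar M (wplus c)) = wbar M c.
Proof.
move=> c_gt0 c_last.
have bar_gt0 : 0 < size (wbar M (wplus c)) by rewrite size_wbar size_wplus.
apply: (@eq_from_nth _ 0); first by rewrite size_wplus // !size_wbar size_wplus.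
move=> i; rewrite size_wplus // size_wbar size_wplus // => lt_i.
rewrite nth_wplus // size_wbar size_wplus // nth_wbar ?size_wplus //.
by rewrite nth_wplus // nth_wbar //; case: eqP => [->|] //; lia.
Qed.

Lemma wplus_neq w : 0 < size w -> wplus w <> w.
Proof.
move=> w_gt0 /(congr1 (fun s => nth 0 s (size w).-1)).
rewrite nth_wplus ?eqxx //; lia.
Qed.

Lemma wbar_wplus_neq M w : 0 < size w -> nth 0 w (size w).-1 < M ->
  wbar M (wplus w) <> wbar M w.
Proof.
move=> w_gt0 w_last /(congr1 (fun s => nth 0 s (size w).-1)).
rewrite !nth_wbar ?size_wplus; try lia.
rewrite nth_wplus ?eqxx //; lia.
Qed.

End WordOperations.

Section Padding.
Implicit Types (w c : seq nat) (M : nat).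

Lemma pad0_drop w s : pad0 (drop s w) = shift s (pad0 w).
Proof. by apply: functional_extensionality => i; rewrite /pad0 /shift nth_drop addnC. Qed.

Lemma pad0_out w i : size w <= i -> pad0 w i = 0.
Proof. by move=> le_w; rewrite /pad0 nth_default. Qed.

Lemma pad0_le M w : all (fun x => x <= M) w -> forall i, pad0 w i <= M.
Proof.
move=> /allP w_le i; rewrite /pad0; case: (ltnP i (size w)) => h.
- by apply: w_le; apply: mem_nth.
- by rewrite nth_default.
Qed.

Lemma pad0_wplus_agree c : 0 < size c -> agree (pad0 c) (pad0 (wplus c)) (size c).-1.
Proof. by move=> c_gt0 i lt_i; rewrite /pad0 nth_wplus ?ifN //; lia. Qed.

Lemma pad0_wplus_last c : 0 < size c -> (pad0 c (size c).-1).+1 = pad0 (wplus c) (size c).-1.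
Proof. by move=> c_gt0; rewrite /pad0 nth_wplus ?eqxx //; lia. Qed.

Lemma pad0_wbar_wplus_agree M c : 0 < size c ->
  agree (pad0 (wbar M (wplus c))) (pad0 (wbar M c)) (size c).-1.
Proof.
move=> c_gt0 i lt_i; rewrite /pad0 !nth_wbar ?size_wplus; try lia.
by rewrite nth_wplus ?ifN //; lia.
Qed.

Lemma pad0_wbar_wplus_last M c : 0 < size c -> nth 0 c (size c).-1 < M ->
  (pad0 (wbar M (wplus c)) (size c).-1).+1 = pad0 (wbar M c) (size c).-1.
Proof.
move=> c_gt0 c_last; rewrite /pad0 !nth_wbar ?size_wplus; try lia.
by rewrite nth_wplus ?eqxx; lia.
Qed.

Lemma seq_lt_finite x y n : (forall i, n <= i -> x i = 0) -> (forall i, n <= i -> y i = 0) ->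
  seq_lt x y <-> lex_lt x y n.
Proof.
move=> x0 y0; split; last by move=> [t [_ [A Hl]]]; exists t.
move=> [t [A Hl]]; exists t; split => //.
by case: (ltnP t n) => // h; rewrite x0 // y0 in Hl.
Qed.

Lemma seq_le_finite x y n : (forall i, n <= i -> x i = 0) -> (forall i, n <= i -> y i = 0) ->
  seq_le x y <-> lex_le x y n.
Proof.
move=> x0 y0; split; first exact: seq_le_lex.
move=> H; apply/seq_le_lexP => k A; case: (ltnP k n) => h; first exact: H.
by rewrite x0 // y0.
Qed.

End Padding.

Definition fund_ineqs M w := forall s, 0 < s < size w ->
  lex_lt (shift s (pad0 w)) (pad0 w) (size w - s) /\
  lex_le (sbar M (pad0 w)) (shift s (pad0 w)) (size w - s).

Section Fundamental.
Implicit Types (w c : seq nat) (M : nat).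

Lemma word_lt_lex w s : s < size w ->
  word_lt (drop s w) (take (size w - s) w) <->
  lex_lt (shift s (pad0 w)) (pad0 w) (size w - s).
Proof.
move=> lt_s; rewrite /word_lt (@seq_lt_finite _ _ (size w - s)); first last.
- by move=> i le_i; apply: pad0_out; rewrite size_takel //; lia.
- by move=> i le_i; apply: pad0_out; rewrite size_drop.
by rewrite pad0_drop; split; apply: eq_lex_lt => // i lt_i; rewrite /pad0 nth_take.
Qed.

Lemma word_le_lex M w s : s < size w ->
  word_le (wbar M (take (size w - s) w)) (drop s w) <->
  lex_le (sbar M (pad0 w)) (shift s (pad0 w)) (size w - s).
Proof.
move=> lt_s; rewrite /word_le (@seq_le_finite _ _ (size w - s)); first last.
- by move=> i le_i; apply: pad0_out; rewrite size_drop.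
- by move=> i le_i; apply: pad0_out; rewrite size_wbar size_takel //; lia.
have A : agree (pad0 (wbar M (take (size w - s) w))) (sbar M (pad0 w)) (size w - s).
  by move=> i lt_i; rewrite /pad0 /sbar nth_wbar ?nth_take // size_takel //; lia.
by rewrite pad0_drop; split; apply: eq_lex_le => //; apply: agree_sym.
Qed.

Lemma fundamentalP M w : 2 <= size w ->
  fundamental M w <-> all (fun x => x <= M) w /\ fund_ineqs M w.
Proof.
case: w => [//|x1 [//|x2 w']] _; set w := x1 :: x2 :: w'.
rewrite /fundamental -/w; split.
- move=> [w_le H]; split => // s /andP [s_gt0 lt_s].
  by have [H1 H2] := H s s_gt0 lt_s; split; [apply/word_lt_lex | apply/word_le_lex].
- move=> [w_le H]; split => // s s_gt0 lt_s.
  by have [H1 H2] := H s ltac:(lia); split; [apply/word_le_lex | apply/word_lt_lex].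
Qed.

Lemma fund_size_gt0 M w : fundamental M w -> 0 < size w.
Proof. by case: w => [[]|]. Qed.

Lemma fund_le M w : fundamental M w -> all (fun x => x <= M) w.
Proof. by case. Qed.

Lemma fund_last_lt M c : fundamental M c -> nth 0 c (size c).-1 < M.
Proof.
case: c => [[]//|x1 [|x2 w']] F; first by have [_ []] := F.
have [c_le W] := (fundamentalP M (isT : 2 <= size [:: x1, x2 & w'])).1 F.
have [[t [lt_t [_ Lt]]] _] := W (size [:: x1, x2 & w']).-1 ltac:(simpl; lia).
have t0 : t = 0 by move: lt_t => /=; lia.
by subst t; move: Lt; rewrite /shift add0n; have := pad0_le c_le 0; rewrite /pad0 /=; lia.
Qed.

End Fundamental.

Section Periodic.
Implicit Types (w c : seq nat) (M : nat).

Lemma per_small w i : i < size w -> per w i = nth 0 w i.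
Proof. by move=> lt_i; rewrite /per modn_small. Qed.

Lemma agree_per_pad0 w : agree (per w) (pad0 w) (size w).
Proof. exact: per_small. Qed.

Lemma per_periodic w i : per w (i + size w) = per w i.
Proof. by rewrite /per; case: (posnP (size w)) => [->|w_gt0]; rewrite ?addn0 ?modnDr. Qed.

Lemma shift_size_per w : shift (size w) (per w) = per w.
Proof. by apply: functional_extensionality => i; apply: per_periodic. Qed.

Lemma shift_per_mod w n : shift n (per w) = shift (n %% size w) (per w).
Proof. by apply: functional_extensionality => i; rewrite /shift /per modnDmr. Qed.

Lemma per_le M w : all (fun x => x <= M) w -> forall i, per w i <= M.
Proof. by move=> w_le i; apply: (pad0_le w_le). Qed.

Lemma sbar_per_wbar M c : 0 < size c -> all (fun x => x <= M) c ->
  sbar M (per (wbar M c)) = per c.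
Proof.
move=> c_gt0 c_le; apply: functional_extensionality => i; rewrite /sbar /per size_wbar.
rewrite nth_wbar ?ltn_pmod //; have := pad0_le c_le (i %% size c); rewrite /pad0; lia.
Qed.

End Periodic.

Lemma fund_ineqs_per M w s : fund_ineqs M w -> 0 < s < size w ->
  lex_lt (shift s (per w)) (per w) (size w - s) /\
  lex_le (sbar M (per w)) (shift s (per w)) (size w - s).
Proof.
move=> W s_range; have [L1 L2] := W s s_range.
have A : agree (pad0 w) (per w) (size w - s) by move=> i lt_i; rewrite per_small //; lia.
have As : agree (shift s (pad0 w)) (shift s (per w)) (size w - s).
  by move=> i lt_i; rewrite /shift per_small //; lia.
have Ab : agree (sbar M (pad0 w)) (sbar M (per w)) (size w - s) by move=> i /A; rewrite /sbar => ->.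
by split; [apply: eq_lex_lt L1 | apply: eq_lex_le L2].
Qed.

Section FundamentalInV.
Variables (M : nat) (w : seq nat).
Hypotheses (w_le : all (fun x => x <= M) w) (w_ge2 : 2 <= size w) (W : fund_ineqs M w).

Let m := size w.

(* Induction on [k]: past the end of the word, the comparison wraps around to a
   comparison with a smaller shift, by periodicity. *)
Lemma per_bar_le_shift k s : s < m ->
  agree (sbar M (per w)) (shift s (per w)) k -> M - per w k <= per w (k + s).
Proof.
have per_le_M := per_le w_le.
elim/ltn_ind: k s => k IH s lt_s A.
case: (posnP s) => [s0|s_gt0].
- subst s; have [[t [lt_t [_ L1]]] L2] := fund_ineqs_per (s := m.-1) W ltac:(rewrite /m; lia).
  have t0 : t = 0 by lia.
  subst t; have {}L2 := L2 0 ltac:(lia) (fun i (hi : i < 0) => ltac:(lia)).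
  rewrite /shift /sbar !add0n in L1 L2.
  case: (posnP k) => [->|k_gt0]; first by rewrite addn0; lia.
  by have := A 0 k_gt0; rewrite /sbar /shift !addn0; lia.
- case: (ltnP k (m - s)) => lt_k.
  + by have [_ L] := fund_ineqs_per (s := s) W ltac:(lia); apply: L.
  + have A' : agree (sbar M (per w)) (shift (m - s) (per w)) (k - (m - s)).
      move=> i lt_i; have := A (i + (m - s)) ltac:(lia); rewrite /sbar /shift.
      have -> : i + (m - s) + s = i + m by lia.
      by rewrite per_periodic; have := per_le_M (i + (m - s)); lia.
    have := IH (k - (m - s)) ltac:(lia) (m - s) ltac:(lia) A'.
    have -> : k - (m - s) + (m - s) = k by lia.
    have -> : k + s = (k - (m - s)) + m by lia.
    by rewrite per_periodic; have := per_le_M k; have := per_le_M (k - (m - s)); lia.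
Qed.

End FundamentalInV.

Lemma fund_per_inV M w : fundamental M w -> in_V M (per w).
Proof.
move=> F; have w_le := fund_le F; have per_le_M := per_le w_le.
split => // n.
case: w F w_le per_le_M => [[]//|x1 [|x2 w']] F w_le per_le_M.
- have per1 i : per [:: x1] i = x1 by rewrite /per modn1.
  have [_ [h1 h2]] := F.
  split; first by apply/seq_le_lexP => k _; rewrite /sbar /shift !per1.
  by right => i; rewrite /shift !per1.
- set w := x1 :: x2 :: w' in F w_le per_le_M *.
  have w_ge2 : 2 <= size w by [].
  have [_ W] := (fundamentalP M w_ge2).1 F.
  rewrite shift_per_mod; have lt_mod : n %% size w < size w by apply: ltn_pmod.
  split; first by apply/seq_le_lexP => k; apply: per_bar_le_shift.
  case: (posnP (n %% size w)) => [->|mod_gt0]; first by right => i; rewrite /shift addn0.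
  left; apply/seq_lt_lex; exists (size w - n %% size w).
  by have [] := fund_ineqs_per (s := n %% size w) W ltac:(lia).
Qed.

Lemma size_flatten_nseq r (w : seq nat) : size (flatten (nseq r w)) = r * size w.
Proof. by elim: r => [|r IH] //=; rewrite size_cat IH mulSn. Qed.

Lemma nth_flatten_nseq r (w : seq nat) i : i < r * size w ->
  nth 0 (flatten (nseq r w)) i = nth 0 w (i %% size w).
Proof.
elim: r i => [|r IH] i lt_i; first by rewrite mul0n in lt_i.
rewrite /= nth_cat; case: (ltnP i (size w)) => h; first by rewrite modn_small.
rewrite IH; last by rewrite mulSn in lt_i; lia.
by rewrite -{2}(subnK h) modnDr.
Qed.

Lemma flatten_nseqSr r (w : seq nat) : flatten (nseq r.+1 w) = flatten (nseq r w) ++ w.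
Proof. by rewrite -addn1 nseqD flatten_cat /= cats0. Qed.

Lemma app_seq_per_agree u v r :
  agree (app_seq u (per v)) (pad0 (u ++ flatten (nseq r v))) (size u + r * size v).
Proof.
move=> i lt_i; rewrite /app_seq /pad0 nth_cat; case: ifP => // le_i.
by rewrite nth_flatten_nseq //; lia.
Qed.

Lemma wminus_wbar M c : 0 < size c -> nth 0 c (size c).-1 < M ->
  wminus (wbar M c) = wbar M (wplus c).
Proof. by move=> c_gt0 c_last; rewrite -wplus_wbar_wplus // wplusK // size_wbar size_wplus. Qed.

Lemma pad0_cat_wminus_lt w v : 0 < size v -> 0 < nth 0 v (size v).-1 ->
  lex_lt (pad0 (w ++ wminus v)) (pad0 (w ++ v)) (size w + size v).
Proof.
move=> v_gt0 v_last; apply: lex_lt_succ_last; first lia.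
- move=> i lt_i; rewrite /pad0 !nth_cat; case: ifP => // le_i.
  by rewrite nth_wminus ?ifN //; lia.
- rewrite /pad0 !nth_cat; have -> : ((size w + size v).-1 < size w) = false by lia.
  have -> : (size w + size v).-1 - size w = (size v).-1 by lia.
  by rewrite nth_wminus ?eqxx; lia.
Qed.

Lemma lt_app_seq_per x u v r : 0 < size v -> 0 < nth 0 v (size v).-1 ->
  agree x (pad0 (u ++ flatten (nseq r v) ++ wminus v)) (size u + r.+1 * size v) ->
  seq_lt x (app_seq u (per v)).
Proof.
move=> v_gt0 v_last A; apply/seq_lt_lex; exists (size u + r.+1 * size v).
have := pad0_cat_wminus_lt (u ++ flatten (nseq r v)) v_gt0 v_last.
rewrite size_cat size_flatten_nseq -addnA -mulSnr -!catA; apply: eq_lex_lt.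
- exact: agree_sym.
- by apply: agree_sym; have := app_seq_per_agree (u := u) (v := v) (r := r.+1); rewrite flatten_nseqSr catA.
Qed.

Lemma fund1_has_zero d : fundamental 1 d -> exists2 t, 0 < t < size d & nth 0 d t = 0.
Proof.
case: d => [[]//|x1 [|x2 w']] F; first by have [_ [h1 h2]] := F; lia.
have [d_le W] := (fundamentalP 1 (isT : 2 <= size [:: x1, x2 & w'])).1 F.
have [[t [lt_t [_ Lt]]] _] := W 1 ltac:(simpl; lia).
exists t.+1; first by move: lt_t => /=; lia.
by move: Lt; rewrite /shift addn1 /pad0; have := pad0_le d_le t; rewrite /pad0; lia.
Qed.

Lemma path_from_A_split p : path_from VA p -> 0 \in map Lstar p ->
  exists r rest, p = nseq r e4 ++ e1 :: rest.
Proof.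
elim: p => [//|e p IH] /= [He Hp]; rewrite in_cons => H.
case: e He Hp H => //= _ Hp H.
- by exists 0, p.
- by have [r [rest ->]] := IH Hp H; exists r.+1, rest.
Qed.

(* Since [d] contains a [0], the path leaves [A] after [e0 e4^r] through [e1]. *)
Lemma comp_eq_prefix M c d a : fundamental 1 d -> comp_eq M c d a ->
  exists r rest, a = wplus c ++ flatten (nseq r (wbar M c)) ++ wbar M (wplus c) ++ rest.
Proof.
move=> Fd [q [Gq [Ed <-]]]; case: q Gq Ed => [//|e p] [-> [_ Hp]] Ed.
have [t t_range dt0] := fund1_has_zero Fd.
have p0 : 0 \in map Lstar p.
  rewrite -Ed /= in t_range dt0; case: t t_range dt0 => [|t] // t_range <-.
  by apply: mem_nth; rewrite size_map in t_range *; lia.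
have [r [rest ->]] := path_from_A_split Hp p0.
exists r, (flatten (map (La M c) rest)).
by rewrite /= map_cat flatten_cat map_nseq.
Qed.

Lemma comp_not_irreducible_seq M a c d : fundamental M c -> fundamental 1 d ->
  comp_eq M c d a -> ~ irreducible_seq M (per a).
Proof.
move=> Fc Fd Ce [_ Hirr].
have c_gt0 := fund_size_gt0 Fc; have c_last := fund_last_lt Fc.
have [r [rest Ea]] := comp_eq_prefix Fd Ce.
set pre := wplus c ++ flatten (nseq r (wbar M c)) ++ wbar M (wplus c).
have {}Ea : a = pre ++ rest by rewrite Ea /pre -!catA.
have size_pre : size pre = size c + r.+1 * size c.
  by rewrite /pre !size_cat size_flatten_nseq !size_wbar !size_wplus //; lia.
have per_pre : agree (per a) (pad0 pre) (size pre).
  move=> i lt_i; rewrite per_small; last by rewrite Ea size_cat; lia.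
  by rewrite Ea /pad0 nth_cat lt_i.
have a_prefix : mkseq (per a) (size c) = wplus c.
  apply: (@eq_from_nth _ 0); first by rewrite size_mkseq size_wplus.
  move=> i; rewrite size_mkseq => lt_i; rewrite nth_mkseq // per_pre; last lia.
  by rewrite /pad0 nth_cat size_wplus // lt_i.
have a_pos : 0 < per a (size c).-1.
  have lt_pred : (size c).-1 < size c by lia.
  rewrite per_pre; last lia.
  by rewrite /pad0 nth_cat size_wplus // lt_pred nth_wplus // eqxx.
have := Hirr (size c) c_gt0 a_pos.
rewrite a_prefix wplusK // wplus_wbar_wplus // => /(_ (fund_per_inV Fc)) Hlt.
apply: (seq_lt_le_false Hlt); left; apply: (lt_app_seq_per (r := r)).
- by rewrite size_wbar.
- by rewrite size_wbar nth_wbar; lia.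
- by rewrite size_wbar wminus_wbar // size_wplus // -size_pre.
Qed.

(* The [L_a]-label of the edge from state [p] to state [q] of the graph [G],
   where state [1] is [A] and state [0] is [B]; the vertex [Start] behaves as [B]. *)
Definition block M c (p q : nat) : seq nat :=
  if q == 0 then (if p == 0 then c else wbar M (wplus c))
  else (if p == 0 then wplus c else wbar M c).

Definition prev_digit (p0 : nat) (q : nat -> nat) (t : nat) : nat :=
  if t is t'.+1 then q t' else p0.

Definition block_decomp M c (X q : nat -> nat) (p0 : nat) :=
  forall t i, i < size c -> X (t * size c + i) = nth 0 (block M c (prev_digit p0 q t) (q t)) i.

Section Blocks.
Variables (M : nat) (c : seq nat).

Lemma block_decomp_shift X q p0 k : block_decomp M c X q p0 ->
  block_decomp M c (shift (k * size c) X) (shift k q) (prev_digit p0 q k).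
Proof.
move=> B t i lt_i; rewrite /shift.
have -> : t * size c + i + k * size c = (t + k) * size c + i by lia.
by rewrite B //; case: t => [|t] //=; rewrite addSn.
Qed.

Hypothesis c_gt0 : 0 < size c.

Lemma size_block p q : size (block M c p q) = size c.
Proof. by rewrite /block; case: eqP => _; case: eqP => _; rewrite ?size_wbar ?size_wplus. Qed.

Lemma block_agree p i : i < (size c).-1 ->
  nth 0 (block M c p 0) i = nth 0 (block M c p 1) i.
Proof.
move=> lt_i; rewrite /block /=; case: eqP => _.
- by rewrite nth_wplus ?ifN //; lia.
- by rewrite !nth_wbar ?size_wplus ?nth_wplus ?ifN //; lia.
Qed.

Lemma block_decomp_agree X Y q1 q2 p0 L :
  block_decomp M c X q1 p0 -> block_decomp M c Y q2 p0 ->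
  agree q1 q2 L -> agree X Y (L * size c).
Proof.
move=> BX BY A i lt_i.
have ht : i %/ size c < L by rewrite ltn_divLR.
rewrite (divn_eq i (size c)) BX ?BY ?ltn_pmod //.
by congr (nth 0 (block _ _ _ _) _); [case: (i %/ size c) ht => //= t ht | ]; apply: A; lia.
Qed.

Hypothesis c_last : nth 0 c (size c).-1 < M.

Lemma block_last p :
  (nth 0 (block M c p 0) (size c).-1).+1 = nth 0 (block M c p 1) (size c).-1.
Proof.
rewrite /block /=; case: eqP => _; first by rewrite nth_wplus ?eqxx //; lia.
by rewrite !nth_wbar ?size_wplus ?nth_wplus ?eqxx; lia.
Qed.

Lemma nth_block_bar p q i : all (fun x => x <= M) c -> p <= 1 -> q <= 1 -> i < size c ->
  nth 0 (block M c (1 - p) (1 - q)) i = M - nth 0 (block M c p q) i.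
Proof.
move=> c_le le_p le_q lt_i.
have c_i : nth 0 c i <= M by exact: (pad0_le c_le i).
have cp_i : nth 0 (wplus c) i <= M by rewrite nth_wplus //; case: eqP => [->|_]; lia.
rewrite /block; case: p le_p => [|[|//]] _; case: q le_q => [|[|//]] _ /=;
  rewrite ?nth_wbar ?size_wplus //; lia.
Qed.

Lemma block_decomp_bar X q p0 : all (fun x => x <= M) c -> p0 <= 1 -> (forall t, q t <= 1) ->
  block_decomp M c X q p0 -> block_decomp M c (sbar M X) (sbar 1 q) (1 - p0).
Proof.
move=> c_le le_p0 q_le B t i lt_i; rewrite /sbar B //.
have -> : prev_digit (1 - p0) (fun i => 1 - q i) t = 1 - prev_digit p0 q t by case: t.
by rewrite nth_block_bar //; case: t.
Qed.

Lemma block_decomp_lt X Y q1 q2 p0 t :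
  block_decomp M c X q1 p0 -> block_decomp M c Y q2 p0 -> (forall t, q2 t <= 1) ->
  agree q1 q2 t -> q1 t < q2 t ->
  lex_lt X Y (t.+1 * size c).
Proof.
move=> BX BY q2_le A lt_t.
have [E1 E2] : q1 t = 0 /\ q2 t = 1 by have := q2_le t; lia.
have Ep : prev_digit p0 q1 t = prev_digit p0 q2 t by case: t A {lt_t E1 E2} => [|t] A //=; apply: A.
exists (t * size c + (size c).-1); split; first by rewrite mulSnr; lia.
split; last by rewrite BX ?BY; try lia; rewrite E1 E2 Ep -block_last.
move=> i lt_i; case: (ltnP i (t * size c)) => h.
- by apply: (block_decomp_agree BX BY A).
- rewrite -(subnKC h) BX ?BY; try lia.
  by rewrite E1 E2 Ep block_agree //; lia.
Qed.

Lemma block_decomp_lex_lt X Y q1 q2 p0 L :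
  block_decomp M c X q1 p0 -> block_decomp M c Y q2 p0 ->
  (forall t, q1 t <= 1) -> (forall t, q2 t <= 1) ->
  lex_lt X Y (L * size c) -> lex_lt q1 q2 L.
Proof.
move=> BX BY q1_le q2_le W.
case: (lex_trichotomy q1 q2 L) => [A|[//|[t [lt_t [A Lt]]]]]; exfalso.
- by apply: (lex_leNgt _ W); apply/agree_lex_le/agree_sym/(block_decomp_agree BX BY A).
- apply: (lex_leNgt (lex_ltW W)); apply: lex_lt_widen (block_decomp_lt BY BX q1_le A Lt).
  by apply: leq_mul.
Qed.

Lemma block_decomp_lex_le X Y q1 q2 p0 L :
  block_decomp M c X q1 p0 -> block_decomp M c Y q2 p0 ->
  (forall t, q1 t <= 1) -> (forall t, q2 t <= 1) ->
  lex_le X Y (L * size c) -> lex_le q1 q2 L.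
Proof.
move=> BX BY q1_le q2_le W.
case: (lex_trichotomy q1 q2 L) => [/agree_lex_le //|[/lex_ltW //|[t [lt_t [A Lt]]]]].
exfalso; apply: (lex_leNgt W); apply: lex_lt_widen (block_decomp_lt BY BX q1_le A Lt).
by apply: leq_mul.
Qed.

End Blocks.

Definition in_state M c (p : nat) (F : nat -> nat) :=
  if p == 0 then seq_le (per c) F else seq_le F (per (wbar M c)).

Definition next_digit M c (p : nat) (B : seq nat) : nat :=
  if p == 0 then B == wplus c else B == wbar M c.

Fixpoint digits M c (al : nat -> nat) (k : nat) : nat :=
  if k is k'.+1
  then next_digit M c (digits M c al k') (mkseq (shift (k * size c) al) (size c))
  else 1.

Lemma mkseq_agree (F : nat -> nat) u : agree F (pad0 u) (size u) -> mkseq F (size u) = u.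
Proof.
move=> A; apply: (@eq_from_nth _ 0); first by rewrite size_mkseq.
by move=> i; rewrite size_mkseq => lt_i; rewrite nth_mkseq // A.
Qed.

Lemma digits_le1 M c al k : digits M c al k <= 1.
Proof. by case: k => [|k] //=; rewrite /next_digit; case: eqP => _; case: eqP. Qed.

Section Automaton.
Variables (M : nat) (c : seq nat) (al : nat -> nat).
Hypotheses (c_gt0 : 0 < size c) (c_last : nth 0 c (size c).-1 < M)
  (c_le : all (fun x => x <= M) c) (al_V : in_V M al)
  (al_pre : agree al (pad0 (wplus c)) (size c))
  (al_tail : seq_le (shift (size c) al) (per (wbar M c))).

Let al_le : forall i, al i <= M := al_V.1.
Let al_lo n : seq_le (sbar M al) (shift n al) := ((al_V.2) n).1.
Let al_hi n : seq_le (shift n al) al := ((al_V.2) n).2.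

Lemma block_step_B F : seq_le F al -> seq_le (per c) F ->
  let q := next_digit M c 0 (mkseq F (size c)) in
  agree F (pad0 (block M c 0 q)) (size c) /\ in_state M c q (shift (size c) F).
Proof.
move=> F_hi F_st q.
have W1 : lex_le (pad0 c) F (size c).
  by apply: eq_lex_le (seq_le_lex F_st) => //; apply: agree_per_pad0.
have W2 : lex_le F (pad0 (wplus c)) (size c) by apply: eq_lex_le (seq_le_lex F_hi).
case: (lex_squeeze c_gt0 (pad0_wplus_agree c_gt0) (pad0_wplus_last c_gt0) W1 W2) => A.
- have Eq : q = 0.
    by rewrite /q /next_digit /= mkseq_agree //; case: eqP => // /esym /(wplus_neq c_gt0).
  rewrite Eq; split => //.
  rewrite /in_state /= -(shift_size_per c); apply: seq_le_shift F_st _.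
  by apply: agree_trans (@agree_per_pad0 c) (agree_sym A).
- have Eq : q = 1.
    rewrite /q /next_digit /= -{1}(size_wplus c_gt0) mkseq_agree ?eqxx //.
    by rewrite size_wplus.
  rewrite Eq; split => //; rewrite /in_state /=.
  apply: seq_le_trans al_tail; apply: seq_le_shift F_hi _.
  exact: agree_trans A (agree_sym al_pre).
Qed.

Lemma block_step_A F : seq_le (sbar M al) F -> seq_le F (per (wbar M c)) ->
  let q := next_digit M c 1 (mkseq F (size c)) in
  agree F (pad0 (block M c 1 q)) (size c) /\ in_state M c q (shift (size c) F).
Proof.
move=> F_lo F_st q.
have bar_pre : agree (sbar M al) (pad0 (wbar M (wplus c))) (size c).
  by move=> i lt_i; rewrite /sbar /pad0 nth_wbar ?size_wplus // al_pre.
have W1 : lex_le (pad0 (wbar M (wplus c))) F (size c).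
  by apply: eq_lex_le (seq_le_lex F_lo).
have W2 : lex_le F (pad0 (wbar M c)) (size c).
  by apply: eq_lex_le (seq_le_lex F_st) => // i lt_i; rewrite per_small ?size_wbar.
case: (lex_squeeze c_gt0 (pad0_wbar_wplus_agree M c_gt0)
                   (pad0_wbar_wplus_last c_gt0 c_last) W1 W2) => A.
- have Eq : q = 0.
    have Ebar : size (wbar M (wplus c)) = size c by rewrite size_wbar size_wplus.
    rewrite /q /next_digit /= -{1}Ebar mkseq_agree ?Ebar //.
    by case: eqP => // /(wbar_wplus_neq c_gt0 c_last).
  rewrite Eq; split => //; rewrite /in_state /=.
  have c_lo : seq_le (per c) (shift (size c) (sbar M al)).
    rewrite -(sbar_per_wbar c_gt0 c_le); apply: seq_le_bar al_tail => [i|].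
    - exact: al_le.
    - by apply: per_le; apply/allP => x /mapP [y _ ->]; apply: leq_subr.
  apply: seq_le_trans c_lo _; apply: seq_le_shift F_lo _.
  exact: agree_trans bar_pre (agree_sym A).
- have Eq : q = 1.
    by rewrite /q /next_digit /= -{1}(size_wbar M c) mkseq_agree ?eqxx ?size_wbar.
  rewrite Eq; split => //; rewrite /in_state /=.
  have := shift_size_per (wbar M c); rewrite size_wbar => <-.
  apply: seq_le_shift F_st _; apply: agree_trans A _.
  by move=> i lt_i; rewrite per_small ?size_wbar.
Qed.

Lemma in_state_digits k : in_state M c (digits M c al k) (shift (k.+1 * size c) al).
Proof.
elim: k => [|k IH]; first by rewrite mul1n.
have Esh : shift (size c) (shift (k.+1 * size c) al) = shift (k.+2 * size c) al.
  by apply: functional_extensionality => i; rewrite /shift [k.+2 * _]mulSn; congr al; lia.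
rewrite -Esh /=; move: IH; rewrite /in_state.
case: (digits M c al k) (digits_le1 M c al k) => [|[|//]] _ /= F_st.
- by case: (block_step_B (al_hi _) F_st).
- by case: (block_step_A (al_lo _) F_st).
Qed.

Lemma block_decomp_digits : block_decomp M c al (digits M c al) 0.
Proof.
move=> [|k] i lt_i; first by rewrite mul0n add0n al_pre.
have := in_state_digits k; rewrite /in_state /=.
case: (digits M c al k) (digits_le1 M c al k) => [|[|//]] _ /= F_st.
- by have [/(_ i lt_i) + _] := block_step_B (al_hi (k.+1 * size c)) F_st; rewrite /shift addnC.
- by have [/(_ i lt_i) + _] := block_step_A (al_lo (k.+1 * size c)) F_st; rewrite /shift addnC.
Qed.

End Automaton.

Lemma shift_shift s k (x : nat -> nat) : shift s (shift k x) = shift (s + k) x.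
Proof. by apply: functional_extensionality => i; rewrite /shift addnA. Qed.

Lemma last_occurrence (dt : nat -> nat) b i : (forall t, dt t <= 1) ->
  (exists2 t, t < i & dt t = b) ->
  exists2 t, t < i & dt t = b /\ forall s, t < s < i -> dt s = 1 - b.
Proof.
move=> dt_le1 [t0 lt_t0 E0].
have ex : exists t, (t < i) && (dt t == b) by exists t0; rewrite lt_t0 E0 eqxx.
case: (ex_maxnP ex (m := i)) => [t /andP [h _]|t /andP [lt_t /eqP Et] Hmax]; first lia.
exists t => //; split => // s /andP [lt_ts lt_si].
have := dt_le1 s; have := Hmax s; rewrite lt_si /=.
by case: eqP => [_ /(_ isT)|Ne _]; [lia | have := dt_le1 t; lia].
Qed.

Section BinarySequences.
Variables (dt : nat -> nat) (n : nat).
Hypotheses (dt_le1 : forall t, dt t <= 1) (dt0 : dt 0 = 1).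

(* The inequalities [sigma^i d < d] only need checking after a [0]: after a run of
   [1]s they follow from the inequality at the start of the run. *)
Lemma binary_shift_lt : dt n.-1 = 0 ->
  (forall i, 0 < i < n -> dt i.-1 = 0 -> lex_lt (shift i dt) dt (n - i)) ->
  forall i, 0 < i < n -> lex_lt (shift i dt) dt (n - i).
Proof.
move=> dtn HB.
have ex0 : exists t, dt t == 0 by exists n.-1; rewrite dtn.
case: (ex_minnP ex0) => z /eqP z0 zmin.
have ones t : t < z -> dt t = 1.
  by move=> lt_t; have := dt_le1 t; have := zmin t; case: (dt t) => [|[]] // /(_ isT); lia.
have z_gt0 : 0 < z by case: (posnP z) => // E; move: z0; rewrite E dt0.
have zn : z <= n.-1 by apply: zmin; rewrite dtn.
elim/ltn_ind => i IH /andP [i_gt0 lt_i].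
case: (leqP i z) => le_iz.
- exists (z - i); split; first lia; split.
  + by move=> t lt_t; rewrite /shift !ones //; lia.
  + by rewrite /shift subnK // z0 ones //; lia.
- have [dti|dti] := eqVneq (dt i.-1) 0; first by apply: HB => //; rewrite i_gt0.
  have [t0 lt_t0 [dt_t0 after]] := last_occurrence (b := 0) dt_le1 (ex_intro2 _ _ z le_iz z0).
  have lt_t0' : t0 < i.-1.
    case: (ltnP t0 i.-1) => // h; have E : t0 = i.-1 by lia.
    by move: dti; rewrite -E dt_t0.
  set k := t0.+1.
  have Hk : lex_lt (shift k dt) dt ((i - k) + (n - i)).
    rewrite (_ : i - k + (n - i) = n - k); last lia.
    by apply: HB => //; lia.
  have := lex_lt_after_ones (s := i - k) _ dt_le1 Hk.
  rewrite shift_shift (_ : i - k + k = i); last lia.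
  move=> /(_ _) W; apply: lex_lt_le_trans (W _) _.
  + by move=> t lt_t; rewrite /shift after //; lia.
  + apply: lex_le_narrow (lex_ltW (IH (i - k) _ _)); lia.
Qed.

Lemma binary_bar_le_shift :
  (forall i, 0 < i < n -> lex_lt (shift i dt) dt (n - i)) ->
  (forall i, 0 < i < n -> dt i.-1 = 1 -> lex_le (sbar 1 dt) (shift i dt) (n - i)) ->
  forall i, 0 < i < n -> lex_le (sbar 1 dt) (shift i dt) (n - i).
Proof.
move=> Hlt HA i /andP [i_gt0 lt_i].
have [dti|dti] := eqVneq (dt i.-1) 1; first by apply: HA => //; rewrite i_gt0.
have [t0 lt_t0 [dt_t0 after]] := last_occurrence (b := 1) dt_le1 (ex_intro2 _ _ 0 i_gt0 dt0).
have lt_t0' : t0 < i.-1.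
  case: (ltnP t0 i.-1) => // h; have E : t0 = i.-1 by lia.
  by move: dti; rewrite -E dt_t0.
set k := t0.+1.
have Hk : lex_le (sbar 1 dt) (shift k dt) ((i - k) + (n - i)).
  rewrite (_ : i - k + (n - i) = n - k); last lia.
  by apply: HA => //; lia.
have := lex_le_after_zeros (s := i - k) _ Hk.
rewrite shift_shift (_ : i - k + k = i); last lia.
move=> /(_ _) W; apply: lex_le_trans (W _).
- have W2 : lex_le (shift (i - k) dt) dt (n - i).
    apply: lex_le_narrow (lex_ltW (Hlt (i - k) _)); lia.
  exact: lex_le_bar (fun t _ => dt_le1 (t + (i - k))) (fun t _ => dt_le1 t) W2.
- by move=> t lt_t; rewrite /shift after //; lia.
Qed.

End BinarySequences.

Lemma fundamental_of_prefix M (al : nat -> nat) c :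
  (forall n, seq_le (shift n al) al) -> 0 < size c ->
  agree al (pad0 (wplus c)) (size c) -> in_V M (per c) -> nth 0 c (size c).-1 < M ->
  fundamental M c.
Proof.
move=> al_hi c_gt0 al_pre [c_le c_V] c_last.
have c_leM : all (fun x => x <= M) c.
  by apply/allP => x /(nthP 0) [i lt_i <-]; have := c_le i; rewrite per_small.
case: c c_gt0 al_pre c_V c_last c_leM {c_le} => [//|c0 [|c1 c']] c_gt0 al_pre c_V c_last c_leM.
- split => //; split => //.
  have /seq_le_lexP/(_ 0 (fun i (hi : i < 0) => ltac:(lia))) := (c_V 0).1.
  by rewrite /sbar /shift /per.
- set c := [:: c0, c1 & c'] in c_gt0 al_pre c_V c_last c_leM *.
  apply/(fundamentalP M (isT : 2 <= size c)); split => // s /andP [s_gt0 lt_s]; split.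
  + have W1 : lex_lt (shift s (pad0 c)) (shift s al) (size c - s).
      apply: lex_lt_succ_last; first lia.
      * move=> i lt_i; rewrite /shift al_pre; last lia.
        by apply: pad0_wplus_agree; lia.
      * rewrite /shift (_ : (size c - s).-1 + s = (size c).-1); last lia.
        by rewrite al_pre ?pad0_wplus_last //; lia.
    apply: lex_lt_le_trans W1 (eq_lex_le _ _ (seq_le_lex (al_hi s))) => //.
    by move=> i lt_i; rewrite al_pre; [apply/esym/pad0_wplus_agree | ]; lia.
  + apply: eq_lex_le (seq_le_lex (c_V s).1).
    * by move=> i lt_i; rewrite /sbar per_small //; lia.
    * by move=> i lt_i; rewrite /shift per_small //; lia.
Qed.

Section PeriodicBlocks.
Variables (M : nat) (c : seq nat) (al dt : nat -> nat).
Hypotheses (c_gt0 : 0 < size c) (c_last : nth 0 c (size c).-1 < M)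
  (B : block_decomp M c al dt 0) (al_pre : agree al (pad0 (wplus c)) (size c)).

(* A period of [al] ending in state [A] would make [al] restart below [c^+]. *)
Lemma digits_last_eq0 n : 0 < n -> (forall i, al (n * size c + i) = al i) ->
  lex_le (pad0 (wbar M c)) (pad0 c) (size c) -> dt n.-1 = 0.
Proof.
move=> n_gt0 al_per bar_le.
case: (eqVneq (dt n.-1) 0) => // dtn; exfalso.
have restart : agree (pad0 (block M c (dt n.-1) (dt n))) (pad0 (wplus c)) (size c).
  by move=> i lt_i; rewrite -al_pre // -(al_per i) B //; case: n n_gt0 {al_per dtn}.
have W1 : lex_le (pad0 (block M c (dt n.-1) (dt n))) (pad0 (wbar M c)) (size c).
  rewrite /block (negbTE dtn); case: eqP => _; last exact: agree_lex_le.
  apply/lex_ltW/lex_lt_succ_last => //.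
  - exact: pad0_wbar_wplus_agree.
  - exact: pad0_wbar_wplus_last.
have W2 : lex_lt (pad0 c) (pad0 (wplus c)) (size c).
  by apply: lex_lt_succ_last => //; [apply: pad0_wplus_agree | apply: pad0_wplus_last].
apply: (lex_leNgt (agree_lex_le (agree_sym restart))).
exact: lex_le_lt_trans (lex_le_trans W1 bar_le) W2.
Qed.

End PeriodicBlocks.

Section BlockSuffixes.
Variables (M : nat) (c : seq nat) (r : nat).
Hypotheses (c_last : nth 0 c (size c).-1 < M) (c_le : all (fun x => x <= M) c)
  (Wc : fund_ineqs M c) (r_range : 0 < r < size c).

Let c_gt0 : 0 < size c. Proof. lia. Qed.

Lemma fund_ineqs_bar : lex_le (sbar M (shift r (pad0 c))) (pad0 c) (size c - r).
Proof.
have [_ WB] := Wc r_range.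
have := lex_le_bar (x := sbar M (pad0 c)) (fun i _ => leq_subr _ _)
  (fun i _ => pad0_le c_le (i + r)) WB.
by apply: eq_lex_le => // i _; rewrite /sbar; have := pad0_le c_le i; lia.
Qed.

Lemma block_suffix_lt p : lex_lt (shift r (pad0 (block M c p 0))) (pad0 c) (size c - r).
Proof.
have [WA _] := Wc r_range; rewrite /block /=; case: eqP => _ //.
apply: lex_lt_le_trans fund_ineqs_bar; apply: lex_lt_succ_last; first lia.
- move=> i lt_i; rewrite /shift /sbar pad0_wbar_wplus_agree //; last lia.
  by rewrite /pad0 nth_wbar //; lia.
- rewrite /shift /sbar (_ : (size c - r).-1 + r = (size c).-1); last lia.
  by rewrite pad0_wbar_wplus_last // /pad0 nth_wbar //; lia.
Qed.

Lemma block_suffix_le p : lex_le (shift r (pad0 (block M c p 1))) (pad0 c) (size c - r).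
Proof.
have [WA _] := Wc r_range; rewrite /block /=; case: eqP => _.
- apply: lex_le_succ_last WA; first lia.
  + by move=> i lt_i; rewrite /shift; apply: pad0_wplus_agree; lia.
  + rewrite /shift (_ : (size c - r).-1 + r = (size c).-1); last lia.
    exact: pad0_wplus_last.
- by apply: eq_lex_le fund_ineqs_bar => // i lt_i; rewrite /shift /sbar /pad0 nth_wbar //; lia.
Qed.

Lemma block_prefix_lt (p q : nat) : p != 0 ->
  lex_lt (pad0 (block M c p q)) (shift (size c - r) (pad0 (wplus c))) r.
Proof.
move=> p_neq0; have [_ WB] := Wc (s := size c - r) ltac:(lia).
rewrite (_ : size c - (size c - r) = r) in WB; last lia.
have lt_CP : lex_lt (shift (size c - r) (pad0 c)) (shift (size c - r) (pad0 (wplus c))) r.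
  apply: lex_lt_succ_last => //; first lia.
  - by move=> i lt_i; rewrite /shift pad0_wplus_agree //; lia.
  - by rewrite /shift (_ : r.-1 + (size c - r) = (size c).-1) ?pad0_wplus_last //; lia.
apply: eq_lex_lt (lex_le_lt_trans WB lt_CP) => // i lt_i.
rewrite /block (negbTE p_neq0) /sbar /pad0; case: eqP => _; rewrite !nth_wbar ?size_wplus //; try lia.
by rewrite nth_wplus ?ifN //; lia.
Qed.

End BlockSuffixes.

(* If [r = m mod |c|] were positive, the blocks straddling position [m] would make
   [sigma^m al] lexicographically smaller than [al] on its first [|c|] letters. *)
Lemma size_dvd_period M c (al dt : nat -> nat) m :
  0 < size c -> nth 0 c (size c).-1 < M -> all (fun x => x <= M) c -> fund_ineqs M c ->
  block_decomp M c al dt 0 -> agree al (pad0 (wplus c)) (size c) ->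
  (forall i, al (i + m) = al i) -> size c %| m.
Proof.
move=> c_gt0 c_last c_le Wc B al_pre al_per.
rewrite /dvdn; case: (posnP (m %% size c)) => [//|r_gt0]; exfalso.
set r := m %% size c in r_gt0; set q := m %/ size c.
have r_range : 0 < r < size c by rewrite r_gt0 ltn_pmod.
have Em : m = q * size c + r by rewrite /q /r -divn_eq.
have first_part : agree (shift m al) (shift r (pad0 (block M c (prev_digit 0 dt q) (dt q)))) (size c - r).
  move=> i lt_i; rewrite /shift Em.
  have -> : i + (q * size c + r) = q * size c + (i + r) by lia.
  by apply: B; lia.
have second_part : agree (shift (size c - r) (shift m al)) (pad0 (block M c (dt q) (dt q.+1))) r.
  move=> i lt_i; rewrite /shift Em.
  have -> : i + (size c - r) + (q * size c + r) = q.+1 * size c + i by rewrite mulSn; lia.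
  by apply: B; lia.
have CP : agree (pad0 c) (al) (size c - r).
  by move=> i lt_i; rewrite al_pre; [apply: pad0_wplus_agree | ]; lia.
suff : lex_lt (shift m al) al (size c - r + r).
  by apply: lex_leNgt; apply: agree_lex_le => i _; rewrite /shift al_per.
case: (eqVneq (dt q) 0) => dtq.
- apply: lex_lt_widen (leq_addr _ _) _; rewrite dtq in first_part.
  exact: eq_lex_lt (agree_sym first_part) CP (block_suffix_lt c_last c_le Wc r_range _).
- apply: lex_lt_catr.
  + have E1 : block M c (prev_digit 0 dt q) (dt q) = block M c (prev_digit 0 dt q) 1.
      by rewrite /block (negbTE dtq).
    rewrite E1 in first_part.
    have suffix_le := block_suffix_le c_last c_le Wc r_range (p := prev_digit 0 dt q).
    exact: (eq_lex_le (agree_sym first_part) CP suffix_le).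
  + apply: eq_lex_lt (agree_sym second_part) _ (block_prefix_lt c_last c_le Wc r_range _ dtq).
    by move=> i lt_i; rewrite /shift al_pre //; lia.
Qed.

Section DigitsOfFundamental.
Variables (M : nat) (c a : seq nat) (dt : nat -> nat) (n : nat).
Hypotheses (c_gt0 : 0 < size c) (c_last : nth 0 c (size c).-1 < M)
  (c_le : all (fun x => x <= M) c) (B : block_decomp M c (per a) dt 0)
  (dt_le1 : forall t, dt t <= 1) (a_size : size a = n * size c) (Wa : fund_ineqs M a).

Let a_range i : 0 < i < n -> 0 < i * size c < size a.
Proof. by move=> /andP [i_gt0 lt_i]; rewrite a_size; apply/andP; split; nia. Qed.

Let a_rest i : size a - i * size c = (n - i) * size c.
Proof. by rewrite a_size mulnBl. Qed.

Lemma digits_shift_lt_at_zero i : 0 < i < n -> dt i.-1 = 0 ->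
  lex_lt (shift i dt) dt (n - i).
Proof.
move=> i_range dti.
have [Wlt _] := fund_ineqs_per Wa (a_range i_range); rewrite a_rest in Wlt.
have prev_i : prev_digit 0 dt i = 0 by case: i i_range dti {Wlt}.
have Bs := block_decomp_shift i B; rewrite prev_i in Bs.
exact: (block_decomp_lex_lt c_gt0 c_last Bs B (fun t => dt_le1 (t + i)) dt_le1 Wlt).
Qed.

Lemma digits_bar_le_shift_at_one i : 0 < i < n -> dt i.-1 = 1 ->
  lex_le (sbar 1 dt) (shift i dt) (n - i).
Proof.
move=> i_range dti.
have [_ Wle] := fund_ineqs_per Wa (a_range i_range); rewrite a_rest in Wle.
have prev_i : prev_digit 0 dt i = 1 by case: i i_range dti {Wle}.
have Bs := block_decomp_shift i B; rewrite prev_i in Bs.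
have Bb := block_decomp_bar c_gt0 c_last c_le (isT : 0 <= 1) dt_le1 B.
have bar_le1 t : sbar 1 dt t <= 1 by apply: leq_subr.
exact: (block_decomp_lex_le c_gt0 c_last Bb Bs bar_le1 (fun t => dt_le1 (t + i)) Wle).
Qed.

Lemma fundamental_digits : 2 <= n -> dt 0 = 1 -> dt n.-1 = 0 -> fundamental 1 (mkseq dt n).
Proof.
move=> n_ge2 dt0 dtn.
have Glt := binary_shift_lt dt_le1 dt0 dtn digits_shift_lt_at_zero.
have Gle := binary_bar_le_shift dt_le1 dt0 Glt digits_bar_le_shift_at_one.
apply/fundamentalP; first by rewrite size_mkseq.
split; first by apply/allP => x /mapP [i _ ->]; apply: dt_le1.
move=> s; rewrite size_mkseq => s_range.
have A : agree dt (pad0 (mkseq dt n)) n by move=> i lt_i; rewrite /pad0 nth_mkseq.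
have As : agree (shift s dt) (shift s (pad0 (mkseq dt n))) (n - s).
  by move=> i lt_i; rewrite /shift A //; lia.
split.
- by apply: eq_lex_lt As (agreeW _ A) (Glt s s_range); apply: leq_subr.
- apply: eq_lex_le _ As (Gle s s_range).
  by move=> i lt_i; rewrite /sbar A //; lia.
Qed.

End DigitsOfFundamental.

Definition edge_of (p q : nat) : edge :=
  if q == 0 then (if p == 0 then e2 else e1) else (if p == 0 then e3 else e4).

Definition vertex_of (p : nat) : vertex := if p == 0 then VB else VA.

Lemma esrc_edge_of p q : esrc (edge_of p q) = vertex_of p.
Proof. by rewrite /edge_of /vertex_of; case: eqP => _; case: eqP. Qed.

Lemma etgt_edge_of p q : etgt (edge_of p q) = vertex_of q.
Proof. by rewrite /edge_of /vertex_of; case: eqP => _; case: eqP. Qed.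

Lemma path_from_edge_of (f : nat -> nat) k L :
  path_from (vertex_of (f k)) [seq edge_of (f t) (f t.+1) | t <- iota k L].
Proof. by elim: L k => [|L IH] k //=; rewrite esrc_edge_of etgt_edge_of. Qed.

Lemma Lstar_edge_of p q : q <= 1 -> Lstar (edge_of p q) = q.
Proof. by rewrite /edge_of; case: q => [|[|]] //= _; case: eqP. Qed.

Lemma La_edge_of M c p q : La M c (edge_of p q) = block M c p q.
Proof. by rewrite /edge_of /block; case: eqP => _; case: eqP. Qed.

Lemma flatten_mkseq_blocks (f : nat -> nat) j n :
  flatten (mkseq (fun k => mkseq (fun i => f (k * j + i)) j) n) = mkseq f (n * j).
Proof.
elim: n => [|n IH]; first by rewrite mul0n.
rewrite mkseqS -cats1 flatten_cat IH /= cats0 mulSn addnC.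
apply: (@eq_from_nth _ 0); first by rewrite size_cat !size_mkseq.
move=> i; rewrite size_cat !size_mkseq => lt_i; rewrite nth_cat size_mkseq.
case: ifP => h; rewrite !nth_mkseq //; [congr f | ]; lia.
Qed.

Lemma comp_eq_block_decomp M c a (dt : nat -> nat) n :
  0 < size c -> 0 < n -> size a = n * size c -> dt 0 = 1 -> (forall t, dt t <= 1) ->
  block_decomp M c (per a) dt 0 -> comp_eq M c (mkseq dt n) a.
Proof.
move=> c_gt0 n_gt0 a_size dt0 dt_le1 B.
exists (e0 :: [seq edge_of (dt t) (dt t.+1) | t <- iota 0 n.-1]); split; last split.
- by split => //; split => //; have := path_from_edge_of dt 0 n.-1; rewrite /vertex_of dt0.
- apply: (@eq_from_nth _ 0); first by rewrite size_mkseq /= !size_map size_iota; lia.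
  move=> [|i]; rewrite /= !size_map size_iota => lt_i; first by rewrite nth_mkseq.
  rewrite (nth_map e0) ?size_map ?size_iota; last lia.
  rewrite (nth_map 0) ?size_iota ?nth_iota; try lia.
  by rewrite Lstar_edge_of // nth_mkseq //; lia.
- have block_t t : block M c (prev_digit 0 dt t) (dt t)
      = mkseq (fun i => per a (t * size c + i)) (size c).
    apply: (@eq_from_nth _ 0); first by rewrite size_block // size_mkseq.
    by move=> i; rewrite size_block // => lt_i; rewrite nth_mkseq // B.
  have -> : a = mkseq (per a) (n * size c).
    apply: (@eq_from_nth _ 0); first by rewrite size_mkseq.
    by move=> i lt_i; rewrite nth_mkseq -?a_size // per_small.
  rewrite -flatten_mkseq_blocks; congr flatten.
  apply: (@eq_from_nth _ [::]); first by rewrite size_mkseq /= !size_map size_iota; lia.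
  move=> i; rewrite /= !size_map size_iota => lt_i.
  rewrite nth_mkseq -?block_t; last lia.
  case: i lt_i => [|i] lt_i /=; first by rewrite dt0.
  rewrite (nth_map e0) ?size_map ?size_iota; last lia.
  rewrite (nth_map 0) ?size_iota ?nth_iota; try lia.
  by rewrite La_edge_of.
Qed.

Lemma fund_ineqs_of_fundamental M c : fundamental M c -> fund_ineqs M c.
Proof.
case: (ltnP 1 (size c)) => [c_ge2 /(fundamentalP M c_ge2) [] //|le_c1 _ s]; lia.
Qed.

Section IrreducibilityFailure.
Variables (M : nat) (a : seq nat) (j : nat).
Hypotheses (Fa : fundamental M a) (j_gt0 : 0 < j) (a_pos : 0 < per a j.-1)
  (c_V : in_V M (per (wminus (mkseq (per a) j))))
  (not_lt : ~ seq_lt (app_seq (mkseq (per a) j) (per (wplus (wbar M (mkseq (per a) j)))))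
                     (per a)).

Let c := wminus (mkseq (per a) j).

Let size_c : size c = j.
Proof. by rewrite size_wminus size_mkseq. Qed.

Let c_gt0 : 0 < size c.
Proof. by rewrite size_c. Qed.

Let wplus_c : wplus c = mkseq (per a) j.
Proof. by apply: wminusK; rewrite size_mkseq ?nth_mkseq //; lia. Qed.

Lemma failure_prefix : agree (per a) (pad0 (wplus c)) (size c).
Proof. by move=> i lt_i; rewrite wplus_c /pad0 nth_mkseq // -size_c. Qed.

Lemma failure_last : nth 0 c (size c).-1 < M.
Proof.
rewrite size_c nth_wminus ?size_mkseq ?eqxx ?nth_mkseq; try lia.
by have := per_le (fund_le Fa) j.-1; lia.
Qed.

Lemma failure_le : all (fun x => x <= M) c.
Proof. by apply/allP => x /(nthP 0) [i lt_i <-]; have := c_V.1 i; rewrite per_small. Qed.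

Lemma failure_fundamental : fundamental M c.
Proof.
have [_ a_V] := fund_per_inV Fa.
exact: fundamental_of_prefix (fun n => (a_V n).2) c_gt0 failure_prefix c_V failure_last.
Qed.

Lemma failure_tail : seq_le (shift (size c) (per a)) (per (wbar M c)).
Proof.
case: (seq_lt_or_ge (app_seq (mkseq (per a) j) (per (wplus (wbar M (mkseq (per a) j))))) (per a))
  => // ge.
rewrite -wplus_c wplus_wbar_wplus // in ge; last exact: failure_last.
have -> : per (wbar M c) = shift (size c) (app_seq (wplus c) (per (wbar M c))).
  by apply: functional_extensionality => i; rewrite /shift /app_seq size_wplus // ifN ?addnK //; lia.
apply: seq_le_shift ge _ => i lt_i.
by rewrite /app_seq size_wplus // lt_i failure_prefix.
Qed.

Lemma comp_eq_of_irreducibility_failure :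
  exists c d, fundamental M c /\ fundamental 1 d /\ comp_eq M c d a.
Proof.
have Fc := failure_fundamental; have c_last := failure_last; have c_le := failure_le.
have [a_le a_V] := fund_per_inV Fa.
have B := block_decomp_digits c_gt0 c_last c_le (fund_per_inV Fa) failure_prefix failure_tail.
set dt := digits M c (per a) in B.
have dvd_a : size c %| size a.
  apply: size_dvd_period (fund_ineqs_of_fundamental Fc) B failure_prefix _ => //.
  exact: per_periodic.
set n := size a %/ size c.
have a_size : size a = n * size c by rewrite divnK.
have n_gt0 : 0 < n by move: (fund_size_gt0 Fa); rewrite a_size; case: (n).
have dtn : dt n.-1 = 0.
  apply: (digits_last_eq0 c_gt0 c_last B failure_prefix n_gt0).
  - by move=> i; rewrite addnC -a_size per_periodic.
  - apply: eq_lex_le (seq_le_lex (n := size c) ((fund_per_inV Fc).2 0).1).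
    + by move=> i lt_i; rewrite /sbar /pad0 per_small ?nth_wbar.
    + by move=> i lt_i; rewrite /shift addn0 per_small.
have n_ge2 : 2 <= n by case: n n_gt0 dtn {a_size} => [|[|]].
have dt_le1 := digits_le1 M c (per a).
exists c, (mkseq dt n); split => //; split.
- exact: fundamental_digits c_gt0 c_last c_le B dt_le1 a_size
         (fund_ineqs_of_fundamental Fa) n_ge2 erefl dtn.
- exact: comp_eq_block_decomp c_gt0 n_gt0 a_size erefl dt_le1 B.
Qed.

End IrreducibilityFailure.

Unset Implicit Arguments.

Theorem proposition2p19 (M : nat) (a : seq nat) :
  1 <= M -> fundamental M a ->
  (irreducible_seq M (per a) <-> irreducible_word M a).
Proof.
move=> _ Fa; split.
- move=> irr_a; split => // [[c [d [Fc [Fd Ce]]]]].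
  exact: comp_not_irreducible_seq Fc Fd Ce irr_a.
- move=> [_ not_comp]; split; first exact: fund_per_inV.
  move=> j j_gt0 a_pos c_V; apply: NNPP => not_lt; apply: not_comp.
  exact: comp_eq_of_irreducibility_failure Fa j_gt0 a_pos c_V not_lt.
Qed.
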